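(* Let $n\ge1$, $1\le k\le n$ and $p\in[0,1]$. Consider the unordered search problem on an array $\vec{x}=(x_1,\ldots,x_n)$ of $n$ distinct elements where the target $z$ is chosen uniformly at random among the entries of $\vec{x}$. Then any deterministic algorithm that runs in $k$ rounds and succeeds with probability at least $p$ (over the choice of $z$) asks at least $np\bigl(1-\frac{k-1}{2k}p\bigr)-1$ queries in expectation (over the choice of $z$). Moreover, there is a deterministic algorithm for this problem running in $k$ rounds, succeeding with probability at least $p$, that asks at most $np\bigl(1-\frac{k-1}{2k}p\bigr)+1$ queries in expectation.
   Context: Comparison model: the algorithm may only ask an oracle queries ''How is $a$ compared to $b$?'' with $a,b\in\{x_1,\ldots,x_n,z\}$, with answer ''$<$'', ''$=$'' or ''$>$''. The goal is to output the index $\ell$ with $z=x_\ell$. An algorithm runs in $k$ rounds if in each of $k$ rounds it submits a set of queries, chosen depending only on answers from earlier rounds, and then receives all their answers. The query count is the total number of queries asked. *)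

From HB Require Import structures.
From mathcomp Require Import all_boot all_order all_algebra.
From mathcomp Require Import reals.
Set Implicit Arguments. Unset Strict Implicit. Unset Printing Implicit Defensive.
Import Order.TTheory GRing.Theory Num.Theory.

(* Items that can be compared: [Some i] is x_i, [None] is the target z. *)
Definition query (n : nat) := (option 'I_n * option 'I_n)%type.

Inductive cmp := CLt | CEq | CGt.

Definition compare_nat (a b : nat) : cmp :=
  if (a < b)%N then CLt else if a == b then CEq else CGt.

(* The array x : 'I_n -> nat (values from a totally ordered set; distinctness
   is imposed as injectivity in the theorem) and the target z = x_l. *)
Definition value n (x : 'I_n -> nat) (l : 'I_n) (a : option 'I_n) : nat :=
  match a with None => x l | Some i => x i end.

Definition answer n (x : 'I_n -> nat) (l : 'I_n) (q : query n) : cmp :=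
  compare_nat (value x l q.1) (value x l q.2).

Definition transcript n := seq (query n * cmp).

(* A deterministic round-based algorithm: in round r (0-based) it submits the
   set of queries [alg_queries r T], a function of the answers T obtained in
   earlier rounds; finally it outputs an index from all answers. *)
Record algorithm (n : nat) := Algorithm {
  alg_queries : nat -> transcript n -> {set query n};
  alg_output : transcript n -> 'I_n }.

Fixpoint run n (A : algorithm n) (x : 'I_n -> nat) (l : 'I_n) (r : nat)
  : transcript n :=
  match r with
  | 0 => [::]
  | r'.+1 =>
      let T := run A x l r' in
      T ++ [seq (q, answer x l q) | q <- enum (alg_queries A r' T)]
  end.

Definition num_queries n (A : algorithm n) k x l : nat := size (run A x l k).

Definition correct n (A : algorithm n) k x l : bool :=
  alg_output A (run A x l k) == l.

Local Open Scope ring_scope.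

Definition succ_prob (R : realType) n (A : algorithm n) k (x : 'I_n -> nat) : R :=
  #|[set l : 'I_n | correct A k x l]|%:R / n%:R.

Definition exp_queries (R : realType) n (A : algorithm n) k (x : 'I_n -> nat) : R :=
  (\sum_(l : 'I_n) (num_queries A k x l)%:R) / n%:R.

From Pilot Require Import Defs.
From HB Require Import structures.
From mathcomp Require Import all_boot all_order all_algebra.
From mathcomp Require Import reals.
From mathcomp Require Import zify ring lra.
Import Order.TTheory GRing.Theory Num.Theory.
Set Implicit Arguments. Unset Strict Implicit. Unset Printing Implicit Defensive.

(* Lower bound: an adversary answers a round only after revealing, for each
   query of the round whose answer is not yet forced, one new position; the
   revealed positions get the smallest values and the target lies above them.
   For every target outside the set B_s revealed before round s, the run then
   follows the adversary's transcript up to round s.  Hence the algorithm is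
   correct on at most |B_k| + 1 targets, and each of the n - |B_s| targets
   outside B_s pays for all queries of round s, at least |B_(s+1)| - |B_s| of
   them.  Telescoping and Cauchy-Schwarz on these increments bound the total
   below by n b - (k-1)/(2k) b^2 with b = |B_k| >= pn - 1.
   Upper bound: with m = ceil(pn), compare z with x_i for i < m in round
   i mod k, until z is found; the residue classes mod k of [0, m) have sizes
   differing by at most one, which gives the matching count. *)

Section QuadraticBounds.
Variable R : realFieldType.
Local Open Scope ring_scope.

Lemma sqr_sum_le (k : nat) (d : nat -> R) :
  (\sum_(s < k) d s) ^+ 2 <= k%:R * \sum_(s < k) d s ^+ 2.
Proof.
case: (posnP k) => [-> | k_gt0]; first by rewrite !big_ord0 expr0n mul0r.
set S := \sum_(s < k) d s; set Q := \sum_(s < k) d s ^+ 2.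
have expand : \sum_(s < k) (k%:R * d s - S) ^+ 2 = k%:R * (k%:R * Q - S ^+ 2).
  under eq_bigr do rewrite sqrrB exprMn.
  rewrite big_split sumrB /= -!mulr_sumr.
  rewrite sumrMnl -!mulr_suml -mulr_sumr sumr_const card_ord -/S -/Q.
  ring.
have : 0 <= k%:R * (k%:R * Q - S ^+ 2) by rewrite -expand sumr_ge0 // => s _; exact: sqr_ge0.
by rewrite pmulr_rge0 ?ltr0n // subr_ge0.
Qed.

Lemma sum_telescope (k : nat) (e : nat -> R) :
  \sum_(s < k) (e s.+1 - e s) = e k - e 0%N.
Proof. by rewrite -(big_mkord xpredT (fun s => e s.+1 - e s)) telescope_sumr. Qed.

Lemma sum_telescope_sqr (k : nat) (e : nat -> R) :
  2 * \sum_(s < k) (e s.+1 - e s) * e s + \sum_(s < k) (e s.+1 - e s) ^+ 2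
    = e k ^+ 2 - e 0%N ^+ 2.
Proof.
rewrite mulr_sumr -big_split -(sum_telescope k (fun s => e s ^+ 2)) /=.
by apply: eq_bigr => s _; ring.
Qed.

Lemma sum_increments_slack_ge (k : nat) (n : R) (e : nat -> R) : e 0%N = 0 ->
  2 * k%:R * n * e k - (k%:R - 1) * e k ^+ 2
    <= 2 * k%:R * \sum_(s < k) (e s.+1 - e s) * (n - e s).
Proof.
move=> e0.
have split_sum : \sum_(s < k) (e s.+1 - e s) * (n - e s)
    = n * e k - \sum_(s < k) (e s.+1 - e s) * e s.
  under eq_bigr do rewrite mulrBr.
  by rewrite sumrB -mulr_suml sum_telescope e0 subr0 mulrC.
have := sum_telescope_sqr k e; have := sqr_sum_le k (fun s => e s.+1 - e s).
rewrite split_sum sum_telescope e0 expr0n subr0 subr0 /= => cauchy_schwarz tele.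
have := congr1 (GRing.mul k%:R) tele; nra.
Qed.

Definition scaled_bound (k n t : R) : R := 2 * k * n * t - (k - 1) * t ^+ 2.

Lemma scaled_boundE (k n p c : R) : k != 0 ->
  2 * k * ((n * p * (1 - (k - 1) / (2 * k) * p) + c) * n)
    = scaled_bound k n (n * p) + 2 * k * n * c.
Proof. by move=> k0; rewrite /scaled_bound; field. Qed.

Lemma scaled_bound_shift (k n s t : R) : 1 <= k ->
  0 <= s <= n -> 0 <= t <= n -> t <= s + 1 ->
  scaled_bound k n t <= scaled_bound k n s + 2 * k * n.
Proof.
rewrite /scaled_bound => k1 /andP [s0 sn] /andP [t0 tn] ts.
have slope : 0 <= 2 * k * n - (k - 1) * (t + s) by nra.
have -> : 2 * k * n * t - (k - 1) * t ^+ 2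
    = 2 * k * n * s - (k - 1) * s ^+ 2 + (t - s) * (2 * k * n - (k - 1) * (t + s)) by ring.
rewrite lerD2l; case: (lerP t s) => [le_ts | lt_st].
  by apply: le_trans (_ : 0 <= _); [apply: mulr_le0_ge0; lra | nra].
apply: le_trans (_ : 1 * (2 * k * n - (k - 1) * (t + s)) <= _); last by nra.
by apply: ler_wpM2r => //; lra.
Qed.

Lemma scaled_bound_ceil (k n m u : R) : 1 <= k -> 0 <= u -> m <= n -> u <= m < u + 1 ->
  scaled_bound k n m + (k - 1) * m <= scaled_bound k n u + 2 * k * n.
Proof.
rewrite /scaled_bound => k1 u0 mn /andP [um mu].
have slope : 0 <= 2 * k * n - (k - 1) * (u + m) by nra.
have -> : 2 * k * n * m - (k - 1) * m ^+ 2
    = 2 * k * n * u - (k - 1) * u ^+ 2 + (m - u) * (2 * k * n - (k - 1) * (u + m)) by ring.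
nra.
Qed.

End QuadraticBounds.

Lemma compare_nat_lt a b : a < b -> Defs.compare_nat a b = CLt.
Proof. by rewrite /Defs.compare_nat => ->. Qed.

Lemma compare_nat_gt a b : b < a -> Defs.compare_nat a b = CGt.
Proof. by rewrite /Defs.compare_nat => lt_ba; rewrite ltnNge ltnW //= gtn_eqF. Qed.

Lemma compare_nat_refl a : Defs.compare_nat a a = CEq.
Proof. by rewrite /Defs.compare_nat ltnn eqxx. Qed.

Lemma compare_nat_eq a b : Defs.compare_nat a b = CEq -> a = b.
Proof. by rewrite /Defs.compare_nat; case: ltnP => // _; case: eqP. Qed.

Lemma size_run n (A : algorithm n) x l r :
  size (run A x l r) = \sum_(s < r) #|alg_queries A s (run A x l s)|.
Proof.
elim: r => [|r IH]; first by rewrite big_ord0.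
by rewrite big_ord_recr /= size_cat size_map -cardE IH.
Qed.

Section Adversary.
Variables (n : nat) (A : algorithm n).

(* The array the adversary commits to once B lists the positions it has
   revealed: these get the smallest values, in order of revelation. *)
Definition adv_value (B : seq 'I_n) (i : 'I_n) : nat :=
  if i \in B then index i B else size B + i.

(* While B is revealed the target is answered as lying above every position. *)
Definition adv_item (B : seq 'I_n) (a : option 'I_n) : nat :=
  if a is Some i then adv_value B i else size B + n.

Definition adv_answer (B : seq 'I_n) (q : query n) : cmp :=
  Defs.compare_nat (adv_item B q.1) (adv_item B q.2).

(* The answer to q is the same for every extension of B and target outside B. *)
Definition settled (B : seq 'I_n) (q : query n) : bool :=
  match q with
  | (Some i, None) | (None, Some i) => i \in B
  | (Some i, Some j) => (i \in B) || (j \in B) || (i == j)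
  | (None, None) => true
  end.

Definition reveal (B : seq 'I_n) (q : query n) : seq 'I_n :=
  if settled B q then B else
  match q with
  | (Some i, _) | (None, Some i) => rcons B i
  | (None, None) => B
  end.

Fixpoint adversary (r : nat) : transcript n * seq 'I_n :=
  if r is r'.+1 then
    let qs := enum (alg_queries A r' (adversary r').1) in
    let B := foldl reveal (adversary r').2 qs in
    ((adversary r').1 ++ [seq (q, adv_answer B q) | q <- qs], B)
  else ([::], [::]).

Definition revealed (r : nat) : seq 'I_n := (adversary r).2.

Lemma adv_value_inj B : injective (adv_value B).
Proof.
move=> i j; rewrite /adv_value; case iB: (i \in B); case jB: (j \in B).
- by move/index_inj; apply.
- by move=> eq_ij; have := index_mem i B; rewrite iB eq_ij ltnNge leq_addr.
- by move=> eq_ij; have := index_mem j B; rewrite jB -eq_ij ltnNge leq_addr.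
- by move/addnI/val_inj.
Qed.

Lemma adv_value_in B t i : i \in B ->
  adv_value (B ++ t) i = adv_value B i /\ adv_value B i < size B.
Proof.
by move=> iB; rewrite /adv_value mem_cat iB /= index_cat iB index_mem.
Qed.

Lemma adv_value_notin B t i : i \notin B ->
  size B <= adv_value (B ++ t) i /\ size B <= adv_value B i.
Proof.
move=> /negbTE iB; rewrite /adv_value mem_cat iB /= index_cat iB leq_addr.
by case: ifP => _; rewrite ?leq_addr // size_cat -addnA leq_addr.
Qed.

Lemma adv_answer_settled B t l q : settled B q -> l \notin B ->
  adv_answer B q = answer (adv_value (B ++ t)) l q.
Proof.
move=> Bq lB; have [lB_le _] := adv_value_notin t lB.
rewrite /adv_answer /answer; case: q Bq => [[i|] [j|]] /=.
- case: (eqVneq i j) => [-> _|ne]; first by rewrite !compare_nat_refl.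
  rewrite orbF; case iB: (i \in B); case jB: (j \in B) => //= _.
  + by have [-> _] := adv_value_in t iB; have [-> _] := adv_value_in t jB.
  + have [-> ilt] := adv_value_in t iB; have [jge jge'] := adv_value_notin t (negbT jB).
    by rewrite !compare_nat_lt // (leq_trans ilt).
  + have [-> jlt] := adv_value_in t jB; have [ige ige'] := adv_value_notin t (negbT iB).
    by rewrite !compare_nat_gt // (leq_trans jlt).
- move=> iB; have [-> ilt] := adv_value_in t iB.
  by rewrite !compare_nat_lt // (leq_trans ilt) ?leq_addr.
- move=> iB; have [-> ilt] := adv_value_in t iB.
  by rewrite !compare_nat_gt // (leq_trans ilt) ?leq_addr.
- by move=> _; rewrite !compare_nat_refl.
Qed.

Lemma reveal_cat B q : exists t, reveal B q = B ++ t.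
Proof.
rewrite /reveal; case: settled; first by exists [::]; rewrite cats0.
by case: q => [[i|] [j|]]; [exists [:: i] | exists [:: i] | exists [:: j] | exists [::]];
  rewrite ?cats1 ?cats0.
Qed.

Lemma reveal_uniq B q : uniq B -> uniq (reveal B q).
Proof.
rewrite /reveal; case Bq: (settled B q) => // uB.
case: q Bq => [[i|] [j|]] //= /negbT; rewrite rcons_uniq uB andbT //.
by rewrite !negb_or => /andP [/andP [-> _] _].
Qed.

Lemma size_reveal B q : size (reveal B q) <= (size B).+1.
Proof. by rewrite /reveal; case: settled; case: q => [[?|] [?|]]; rewrite ?size_rcons. Qed.

Lemma settled_cat B t q : settled B q -> settled (B ++ t) q.
Proof.
case: q => [[i|] [j|]] //=; rewrite ?mem_cat.
- by case/orP => [/orP [->|->]|->]; rewrite ?orbT.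
- by move->.
- by move->.
Qed.

Lemma settled_reveal B q : settled (reveal B q) q.
Proof.
rewrite /reveal; case Bq: (settled B q) => //.
by case: q Bq => [[i|] [j|]] //= _; rewrite ?mem_rcons ?in_cons ?eqxx.
Qed.

Lemma foldl_reveal_cat B qs : exists t, foldl reveal B qs = B ++ t.
Proof.
elim: qs B => [|q qs IH] B /=; first by exists [::]; rewrite cats0.
have [t1 ->] := reveal_cat B q; have [t2 ->] := IH (B ++ t1).
by exists (t1 ++ t2); rewrite catA.
Qed.

Lemma foldl_reveal_uniq B qs : uniq B -> uniq (foldl reveal B qs).
Proof. by elim: qs B => [|q qs IH] B //= uB; apply/IH/reveal_uniq. Qed.

Lemma size_foldl_reveal B qs : size (foldl reveal B qs) <= size B + size qs.
Proof.
elim: qs B => [|q qs IH] B /=; first by rewrite addn0.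
by apply: leq_trans (IH _) _; rewrite addnS -addSn leq_add2r size_reveal.
Qed.

Lemma foldl_reveal_settled B qs q : q \in qs -> settled (foldl reveal B qs) q.
Proof.
elim: qs B => [|q' qs IH] B //=; rewrite in_cons => /orP [/eqP <-|Hq]; last exact: IH.
have [t ->] := foldl_reveal_cat (reveal B q) qs.
exact/settled_cat/settled_reveal.
Qed.

Lemma revealed_cat r s : r <= s -> exists t, revealed s = revealed r ++ t.
Proof.
elim: s => [|s IH]; first by rewrite leqn0 => /eqP ->; exists [::]; rewrite cats0.
rewrite leq_eqVlt => /orP [/eqP ->|]; first by exists [::]; rewrite cats0.
rewrite ltnS => /IH [t Ht]; rewrite /revealed /=.
have [t2 ->] := foldl_reveal_cat (revealed s) (enum (alg_queries A s (adversary s).1)).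
by exists (t ++ t2); rewrite Ht catA.
Qed.

Lemma revealed_uniq r : uniq (revealed r).
Proof. by elim: r => //= r; apply: foldl_reveal_uniq. Qed.

Lemma size_revealed r : size (revealed r) <= n.
Proof.
have /card_uniqP <- := revealed_uniq r.
by apply: leq_trans (max_card _) _; rewrite card_ord.
Qed.

Lemma size_revealed_mono r s : r <= s -> size (revealed r) <= size (revealed s).
Proof. by move=> /revealed_cat [t ->]; rewrite size_cat leq_addr. Qed.

Lemma size_revealedS r :
  size (revealed r.+1) <= size (revealed r) + #|alg_queries A r (adversary r).1|.
Proof. by rewrite cardE; apply: size_foldl_reveal. Qed.

Lemma run_adversary k l r : r <= k -> l \notin revealed r ->
  run A (adv_value (revealed k)) l r = (adversary r).1.
Proof.
elim: r => [//|r IH] rk lB /=.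
have [t Ht] := revealed_cat rk.
have [t2 Ht2] := foldl_reveal_cat (revealed r) (enum (alg_queries A r (adversary r).1)).
have lB' : l \notin revealed r.
  by move: lB; rewrite /revealed /= -/(revealed r) Ht2 mem_cat negb_or => /andP [].
rewrite IH ?(ltnW rk) //; congr (_ ++ _); apply/eq_in_map => q qs_q.
rewrite Ht /revealed /=; congr (_, _); symmetry; apply: adv_answer_settled => //.
exact: foldl_reveal_settled.
Qed.

Lemma card_correct_adversary k :
  #|[set l | correct A k (adv_value (revealed k)) l]| <= size (revealed k) + 1.
Proof.
set C := [set l | _].
have sub : C \subset [set l | l \in revealed k] :|: [set alg_output A (adversary k).1].
  apply/subsetP => l; rewrite !inE /correct => /eqP out_l.
  case lB: (l \in revealed k) => //=.
  by rewrite run_adversary ?lB // in out_l; rewrite out_l.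
apply: leq_trans (subset_leq_card sub) _; apply: leq_trans (leq_card_setU _ _) _.
by rewrite cards1 cardsE leq_add2r; have /card_uniqP -> := revealed_uniq k.
Qed.

Lemma card_notin (B : seq 'I_n) : uniq B -> #|[set l | l \notin B]| = n - size B.
Proof.
move=> /card_uniqP <-; have := cardC (mem B); rewrite card_ord => total.
by rewrite -[n in n - _]total addKn; apply: eq_card => l; rewrite !inE.
Qed.

Lemma sum_num_queries_adversary k :
  \sum_(s < k) (size (revealed s.+1) - size (revealed s)) * (n - size (revealed s))
    <= \sum_l num_queries A k (adv_value (revealed k)) l.
Proof.
pose Q s := #|alg_queries A s (adversary s).1|.
apply: (@leq_trans (\sum_(s < k) \sum_(l | l \notin revealed s) Q s)).
  apply: leq_sum => s _; rewrite sum_nat_cond_const card_notin ?revealed_uniq // mulnC.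
  by rewrite leq_mul2l leq_subLR size_revealedS orbT.
rewrite (eq_bigr _ (fun s _ => big_mkcond _ _)) exchange_big /=.
apply: leq_sum => l _; rewrite /num_queries size_run; apply: leq_sum => s _.
by case: ifP => // lB; rewrite run_adversary // ltnW.
Qed.

End Adversary.

Section StripedSearch.
Variables (n : nat) (d0 : 'I_n) (m k : nat).

Definition is_eq (c : cmp) : bool := if c is CEq then true else false.

Definition stripe (s : nat) : {set query n} :=
  [set (Some i, None) | i in [set i : 'I_n | (i < m) && (i %% k == s)]].

Definition target_found (T : transcript n) : bool := has (fun e => is_eq e.2) T.

(* [d0] is a junk output, used only when the target was never found. *)
Definition found_index (T : transcript n) : 'I_n :=
  foldr (fun e i => if is_eq e.2 then (if e.1.1 is Some j then j else i) else i) d0 T.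

Definition striped_search : algorithm n :=
  Algorithm (fun s T => if target_found T then set0 else stripe s) found_index.

Lemma query_with_target_inj : injective (fun i : 'I_n => ((Some i, None) : query n)).
Proof. by move=> i j [->]. Qed.

Lemma mem_stripe s i : ((Some i, None) \in stripe s) = (i < m) && (i %% k == s).
Proof. by rewrite /stripe (mem_imset _ _ query_with_target_inj) inE. Qed.

Lemma card_stripe s : #|stripe s| = \sum_(i < n) ((i < m) && (i %% k == s)).
Proof.
rewrite /stripe card_imset; last exact: query_with_target_inj.
by rewrite -sum1_card big_mkcond /=; apply: eq_bigr => i _; rewrite inE; case: ifP.
Qed.

Variables (x : 'I_n -> nat) (x_inj : injective x) (l : 'I_n).

Definition points_to_target (e : query n * cmp) : bool := ~~ is_eq e.2 || (e.1.1 == Some l).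

Lemma all_points_to_target r : all points_to_target (run striped_search x l r).
Proof.
elim: r => [//|r IH] /=; rewrite all_cat IH /= all_map; apply/allP => q.
rewrite mem_enum; case: ifP; first by rewrite inE.
move=> _; case: q => [a b] /imsetP [i _ [-> ->]] /=; rewrite /points_to_target /answer /=.
by case cmp_i: (Defs.compare_nat _ _) => //=; rewrite (x_inj (compare_nat_eq cmp_i)).
Qed.

Lemma found_index_target T :
  target_found T -> all points_to_target T -> found_index T = l.
Proof.
elim: T => [//|e T IH] /= found_T /andP [pe pT].
case eq_e: (is_eq e.2); first by move: pe; rewrite /points_to_target eq_e /= => /eqP ->.
by apply: IH => //; move: found_T; rewrite /target_found /= eq_e.
Qed.

Lemma target_found_run r :
  target_found (run striped_search x l r) = (l < m) && (l %% k < r).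
Proof.
elim: r => [|r IH] /=; first by rewrite andbF.
rewrite /target_found has_cat -/(target_found _) IH.
case: ifP => [/andP [-> /= lt_r] | not_found]; first by rewrite ltnS ltnW.
have -> : has (fun e => is_eq e.2) [seq (q, answer x l q) | q <- enum (stripe r)] =
          (l < m) && (l %% k == r).
  rewrite -mem_stripe has_map; apply/hasP/idP.
  - case=> [[a b]]; rewrite mem_enum => stripe_ab.
    have /imsetP [i _ [ea eb]] := stripe_ab; subst a b; move: stripe_ab.
    rewrite /answer /=; case cmp_i: (Defs.compare_nat _ _) => // + _.
    by rewrite -(x_inj (compare_nat_eq cmp_i)).
  - by move=> stripe_l; exists (Some l, None); rewrite ?mem_enum //= /answer /= compare_nat_refl.
by move: not_found; case: (l < m) => //= not_found; rewrite ltnS leq_eqVlt not_found orbF.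
Qed.

Hypothesis k_gt0 : 0 < k.

Lemma correct_striped_search : l < m -> correct striped_search k x l.
Proof.
move=> lm; rewrite /correct /= found_index_target ?eqxx ?all_points_to_target //.
by rewrite target_found_run lm ltn_pmod.
Qed.

Lemma num_queries_striped_search : num_queries striped_search k x l =
  \sum_(i < n) ((i < m) && ~~ ((l < m) && (l %% k < i %% k))).
Proof.
rewrite /num_queries size_run /=.
pose before s := ~~ ((l < m) && (l %% k < s)).
rewrite (eq_bigr (fun s : 'I_k =>
    \sum_(i < n) before s * ((i < m) && (i %% k == s)))); last first.
  move=> s _; rewrite target_found_run /before; case: ifP => _; first by rewrite cards0 big1.
  by rewrite card_stripe; apply: eq_bigr => i _; rewrite mul1n.
rewrite exchange_big /=; apply: eq_bigr => i _.
rewrite (bigD1 (Ordinal (ltn_pmod i k_gt0))) //= eqxx andbT big1 ?addn0; last first.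
  move=> s /eqP ne; suff /negbTE -> : i %% k != s by rewrite andbF muln0.
  by apply/eqP => eq_s; apply: ne; apply: val_inj.
by rewrite /before mulnb andbC.
Qed.

End StripedSearch.

Lemma sum_bool_card n (P : pred 'I_n) : \sum_(i < n) (P i : nat) = #|[set i | P i]|.
Proof.
rewrite -sum1_card [RHS]big_mkcond /=; apply: eq_bigr => i _; rewrite inE; by case: (P i).
Qed.

Lemma sum_ord_ltn n m : \sum_(i < n) (i < m : nat) = minn m n.
Proof.
elim: n => [|n IH]; first by rewrite big_ord0 minn0.
by rewrite big_ord_recr /= IH; case: ltnP => lt_nm; lia.
Qed.

Lemma card_residue_class_le n m k r : 0 < k ->
  \sum_(i < n) ((i < m) && (i %% k == r)) <= (m.-1 %/ k).+1.
Proof.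
move=> k_gt0; rewrite sum_bool_card; set S := [set i | _].
pose quot (i : 'I_n) : 'I_n := Ordinal (leq_ltn_trans (leq_div i k) (ltn_ord i)).
have quot_inj : {in S &, injective quot}.
  move=> i j; rewrite !inE => /andP [_ /eqP ri] /andP [_ /eqP rj] [eq_q].
  by apply: val_inj; rewrite /= (divn_eq i k) (divn_eq j k) eq_q ri rj.
rewrite -(card_in_imset quot_inj).
apply: (@leq_trans #|[set j : 'I_n | j < (m.-1 %/ k).+1]|).
  apply: subset_leq_card; apply/subsetP => j /imsetP [i]; rewrite /S inE => /andP [im _] ->.
  by rewrite inE /= ltnS leq_div2r // -ltnS; case: (m) im.
by rewrite -sum_bool_card sum_ord_ltn geq_minl.
Qed.

Lemma sum_same_residue_le n m k : 0 < k -> m <= n ->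
  k * (\sum_(l < n) \sum_(i < n) ((l < m) && (i < m) && (l %% k == i %% k))) + m
    <= m * m + k * m.
Proof.
move=> k_gt0 mn; case: (posnP m) => [-> | m_gt0].
  by rewrite big1 ?muln0 // => l _; rewrite big1.
set E := \sum_(l < n) _.
have : E <= m * (m.-1 %/ k).+1.
  apply: (@leq_trans (\sum_(l < n) (l < m) * (m.-1 %/ k).+1)).
    apply: leq_sum => l _; case: (l < m) => /=; last by rewrite big1.
    rewrite mul1n (eq_bigr (fun i : 'I_n => ((i < m) && (i %% k == l %% k) : nat))).
      exact: card_residue_class_le.
    by move=> i _; rewrite eq_sym.
  by rewrite -big_distrl /= sum_ord_ltn (minn_idPl mn).
have : k * (m.-1 %/ k).+1 <= m.-1 + k.
  by rewrite mulnS addnC leq_add2r mulnC leq_divM.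
clearbody E; case: m m_gt0 {mn} => // m' _ /= quot_le E_le.
have := leq_mul (leqnn k) E_le; rewrite mulnCA => kE_le.
have := leq_mul (leqnn m'.+1) quot_le => /(leq_trans kE_le).
rewrite mulnDr mulSn; lia.
Qed.

Lemma sum_striped_cost_le n m k : 0 < k -> m <= n ->
  2 * k * (\sum_(l < n) \sum_(i < n) ((i < m) && ~~ ((l < m) && (l %% k < i %% k))))
    + k * m ^ 2 + m <= 2 * k * n * m + m ^ 2 + k * m.
Proof.
move=> k_gt0 mn; set N := \sum_(l < n) _.
pose before (l i : 'I_n) := ((l < m) && (i < m) && (l %% k < i %% k) : nat).
pose same (l i : 'I_n) := ((l < m) && (i < m) && (l %% k == i %% k) : nat).
set C := \sum_(l < n) \sum_(i < n) before l i.
have N_C : N + C = n * m.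
  rewrite /N /C -big_split /=.
  rewrite (eq_bigr (fun l => \sum_(i < n) (i < m : nat))); last first.
    move=> l _; rewrite -big_split /=; apply: eq_bigr => i _; rewrite /before.
    by case: (i < m); case: (l < m); case: (_ < _).
  under eq_bigr do rewrite sum_ord_ltn (minn_idPl mn).
  by rewrite big_const_ord iter_addn_0 mulnC.
have C_same : C + C + \sum_(l < n) \sum_(i < n) same l i = m * m.
  have C_sym : C = \sum_(l < n) \sum_(i < n) before i l by rewrite /C exchange_big.
  rewrite {2}C_sym -!big_split /=.
  rewrite (eq_bigr (fun l : 'I_n => (l < m) * \sum_(i < n) (i < m : nat))); last first.
    move=> l _; rewrite -!big_split big_distrr /=; apply: eq_bigr => i _.
    by rewrite /before /same; case: (l < m); case: (i < m) => //=; case: ltngtP.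
  by rewrite -big_distrl /= sum_ord_ltn (minn_idPl mn).
set E := \sum_(l < n) _ in C_same.
have E_le : k * E + m <= m * m + k * m := sum_same_residue_le k_gt0 mn.
clearbody N C E; have := congr1 (muln (2 * k)) N_C; have := congr1 (muln k) C_same.
rewrite !mulnDr; lia.
Qed.

Local Open Scope ring_scope.

Lemma lower_bound (R : realType) (n k : nat) (p : R) :
  (0 < n)%N -> (0 < k)%N -> 0 <= p <= 1 ->
  forall A : algorithm n,
    (forall x : 'I_n -> nat, injective x -> p <= succ_prob R A k x) ->
  exists x : 'I_n -> nat, injective x /\
    n%:R * p * (1 - (k%:R - 1) / (2 * k%:R) * p) - 1 <= exp_queries R A k x.
Proof.
move=> n_gt0 k_gt0 /andP [p0 p1] A succ_A; set B := revealed A k.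
exists (adv_value B); split; first exact: adv_value_inj.
have n0 : (0 : R) < n%:R by rewrite ltr0n.
have k1 : (1 : R) <= k%:R by rewrite ler1n.
have np_le : n%:R * p <= (size B)%:R + 1.
  have := succ_A _ (adv_value_inj (B := B)); rewrite /succ_prob ler_pdivlMr // mulrC.
  by move/le_trans; apply; rewrite natr1 ler_nat -addn1 card_correct_adversary.
pose e s : R := (size (revealed A s))%:R.
have cast_cost : ((\sum_(s < k) (size (revealed A s.+1) - size (revealed A s))
    * (n - size (revealed A s)))%:R : R) = \sum_(s < k) (e s.+1 - e s) * (n%:R - e s).
  rewrite natr_sum; apply: eq_bigr => s _.
  by rewrite natrM !natrB ?size_revealed ?size_revealed_mono.
rewrite /exp_queries ler_pdivlMr // -natr_sum -(ler_pM2l (_ : 0 < 2 * k%:R)); last first.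
  by rewrite mulr_gt0 ?ltr0n.
rewrite scaled_boundE ?pnatr_eq0 -?lt0n // mulrN1 lerBlDr.
apply: le_trans (scaled_bound_shift (s := e k) k1 _ _ np_le) _.
- by rewrite ler0n ler_nat size_revealed.
- by rewrite mulr_ge0 ?ler0n //= ler_piMr ?ler0n.
rewrite lerD2r; apply: le_trans (@sum_increments_slack_ge _ k n%:R e _) _; first by [].
by rewrite -cast_cost ler_wpM2l ?mulr_ge0 ?ler0n // ler_nat sum_num_queries_adversary.
Qed.

Lemma upper_bound (R : realType) (n k : nat) (p : R) :
  (0 < n)%N -> (0 < k)%N -> 0 <= p <= 1 ->
  exists A : algorithm n, forall x : 'I_n -> nat, injective x ->
    p <= succ_prob R A k x /\
    exp_queries R A k x <= n%:R * p * (1 - (k%:R - 1) / (2 * k%:R) * p) + 1.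
Proof.
move=> n_gt0 k_gt0 /andP [p0 p1].
have n0 : (0 : R) < n%:R by rewrite ltr0n.
have k1 : (1 : R) <= k%:R by rewrite ler1n.
have [m np_le_m min_m] := ex_minnP (ex_intro (fun m => n%:R * p <= m%:R) n (ler_piMr (ler0n _ _) p1)).
have mn : (m <= n)%N by apply: min_m; rewrite ler_piMr.
have np0 : 0 <= n%:R * p by rewrite mulr_ge0 ?ler0n.
have m_lt : (m%:R : R) < n%:R * p + 1.
  case: m np_le_m min_m {mn} => [|m] _ min_m; first by rewrite ltr_pwDr.
  rewrite -natr1 ltrD2r ltNge; apply/negP => /min_m; by rewrite ltnn.
exists (striped_search (Ordinal n_gt0) m k) => x x_inj; split.
- rewrite /succ_prob ler_pdivlMr // mulrC; apply: le_trans np_le_m _; rewrite ler_nat.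
  apply: (@leq_trans #|[set l : 'I_n | (l < m)%N]|).
    by rewrite -sum_bool_card sum_ord_ltn (minn_idPl mn).
  by apply: subset_leq_card; apply/subsetP => l; rewrite !inE; apply: correct_striped_search.
- rewrite /exp_queries ler_pdivrMr // -natr_sum -(ler_pM2l (_ : 0 < 2 * k%:R)); last first.
    by rewrite mulr_gt0 ?ltr0n.
  rewrite scaled_boundE ?pnatr_eq0 -?lt0n // mulr1.
  under eq_bigr do rewrite num_queries_striped_search //.
  have := sum_striped_cost_le k_gt0 mn; rewrite -(ler_nat R) !natrD !natrM ?natrX.
  move=> cost_le; apply: le_trans (scaled_bound_ceil (m := m%:R) k1 np0 _ _).
  - by rewrite /scaled_bound; lra.
  - by rewrite ler_nat.
  - by rewrite np_le_m m_lt.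
Qed.

Theorem theorem2 (R : realType) (n k : nat) (p : R) :
  (1 <= n)%N -> (1 <= k <= n)%N -> 0 <= p <= 1 ->
  (forall A : algorithm n,
      (forall x : 'I_n -> nat, injective x -> p <= succ_prob R A k x) ->
      exists x : 'I_n -> nat, injective x /\
        n%:R * p * (1 - (k%:R - 1) / (2 * k%:R) * p) - 1 <= exp_queries R A k x)
  /\
  (exists A : algorithm n,
      forall x : 'I_n -> nat, injective x ->
        p <= succ_prob R A k x /\
        exp_queries R A k x <= n%:R * p * (1 - (k%:R - 1) / (2 * k%:R) * p) + 1).
Proof.
move=> n_gt0 /andP [k_gt0 _] p01.
by split; [exact: lower_bound | exact: upper_bound].
Qed.
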